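(* Let $r\ge 1$, $N\ge 1$ and $n\ge 1$ be integers, and for an integer $e\ge 0$ let $$M_r(e)=\sum_{\substack{i_1+\cdots+i_r=e\\ i_1,\dots,i_r\ge 0}}\frac{(N!)^r}{(N+i_1)!\cdots(N+i_r)!}.$$ Then $$B_{N,n}^{(r)}=(-1)^n\,n!\,\det\big(c_{ij}\big)_{1\le i,j\le n},$$ where $c_{ij}=M_r(i-j+1)$ if $j\le i$, $c_{ij}=1$ if $j=i+1$, and $c_{ij}=0$ if $j>i+1$.
   Context: For positive integers $N$ and $r$, the higher order hypergeometric Bernoulli numbers $B^{(r)}_{N,n}$ ($n\ge0$) are defined by $$\left(\frac{x^N/N!}{e^x-\sum_{n=0}^{N-1}x^n/n!}\right)^r=\sum_{n=0}^\infty B_{N,n}^{(r)}\frac{x^n}{n!}.$$ *)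

From mathcomp Require Import all_boot all_order all_algebra.
Set Implicit Arguments. Unset Strict Implicit. Unset Printing Implicit Defensive.
Import Order.TTheory GRing.Theory Num.Theory.
Local Open Scope ring_scope.

Definition fps := nat -> rat.

Definition fps_mul (a b : fps) : fps :=
  fun n => \sum_(k < n.+1) a k * b (n - k)%N.

Definition fps_one : fps := fun n => if n == 0%N then 1 else 0.

Definition fps_pow (a : fps) (r : nat) : fps := iter r (fps_mul a) fps_one.

Definition exp_tail (N : nat) : fps :=
  fun k => if (N <= k)%N then (k`!%:R)^-1 else 0.

Definition xN_fact (N : nat) : fps :=
  fun k => if k == N then (N`!%:R)^-1 else 0.

Definition egf (b : nat -> rat) : fps := fun n => b n / n`!%:R.

(* b is the sequence of higher order hypergeometric Bernoulli numbers B_{N,n}^{(r)}: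
   (sum_n b_n x^n/n!) = ((x^N/N!)/(e^x - sum_{n<N} x^n/n!))^r, i.e.
   (sum_n b_n x^n/n!) * (e^x - sum_{n<N} x^n/n!)^r = (x^N/N!)^r as formal power series. *)
Definition is_hyp_bernoulli (N r : nat) (b : nat -> rat) : Prop :=
  forall m, fps_mul (egf b) (fps_pow (exp_tail N) r) m = fps_pow (xN_fact N) r m.

Definition Mr (r N e : nat) : rat :=
  \sum_(i : {ffun 'I_r -> 'I_e.+1} | (\sum_(j < r) (i j : nat) == e)%N)
     ((N`!%:R) ^+ r / \prod_(j < r) ((N + i j)`!)%:R).

(* The n x n matrix (c_ij), with 0-based indices (i,j here = i-1,j-1 in the paper). *)
Definition cmat (r N n : nat) : 'M[rat]_n :=
  \matrix_(i < n, j < n)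
    if (j <= i)%N then Mr r N (i - j).+1
    else if (j : nat) == i.+1 then 1 else 0.

From mathcomp Require Import all_boot all_order all_algebra.
Import GRing.Theory Num.Theory.
Local Open Scope ring_scope.

(* Write e^x - sum_(n<N) x^n/n! = x^N D(x) with D(x) = sum_i x^i/(N+i)!, and
   x^N/N! = x^N (1/N!).  Cancelling x^(N r), the defining identity of the
   B_(N,n)^(r) says that their generating function is the inverse of
   M(x) = N!^r D(x)^r = sum_e M_r(e) x^e, a series with constant term 1.
   Multiplication by a series is given by its lower triangular Toeplitz
   matrix T, so the Toeplitz matrix of the inverse is T^-1 = adj T (det T = 1);
   its entry (n, 0) is the cofactor of T whose minor is the Hessenberg matrix
   (c_ij).  Identities between power series are checked coefficientwise on
   truncated polynomials. *)

Lemma fps_mul_poly (a b : fps) (p q : {poly rat}) m :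
    (forall i, (i <= m)%N -> p`_i = a i) -> (forall i, (i <= m)%N -> q`_i = b i) ->
  fps_mul a b m = (p * q)`_m.
Proof.
move=> pa qb; rewrite coefM; apply: eq_bigr => k _.
by rewrite pa ?qb ?leq_subr // -ltnS.
Qed.

Lemma fps_pow_poly (a : fps) (p : {poly rat}) r m :
  (forall i, (i <= m)%N -> p`_i = a i) -> fps_pow a r m = (p ^+ r)`_m.
Proof.
move=> pa; elim: r {-2}m (leqnn m) => [|r IH] i im.
  by rewrite expr0 coef1 /fps_pow /= /fps_one; case: eqP.
rewrite exprS; apply: fps_mul_poly => j ji; first exact/pa/(leq_trans ji).
exact/esym/IH/(leq_trans ji).
Qed.

Lemma fps_mul1 (f : fps) m : fps_mul fps_one f m = f m.
Proof.
rewrite (@fps_mul_poly _ _ 1 (\poly_(i < m.+1) f i)) ?mul1r ?coef_poly ?ltnSn //.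
by move=> i _; rewrite coef1 /fps_one; case: eqP.
by move=> i; rewrite coef_poly ltnS => ->.
Qed.

Definition fps_C (c : rat) : fps := fun i => if i == 0%N then c else 0.

Lemma fps_pow_C c r m : fps_pow (fps_C c) r m = fps_C (c ^+ r) m.
Proof.
rewrite (@fps_pow_poly _ c%:P) => [|i _]; last by rewrite coefC.
by rewrite -rmorphXn coefC.
Qed.

Definition fps_shift (k : nat) (g : fps) : fps :=
  fun i => if (k <= i)%N then g (i - k)%N else 0.

Lemma fps_mul_pow_shift {E g : fps} {k : nat} : E =1 fps_shift k g ->
  forall (a : fps) r m,
  fps_mul a (fps_pow E r) m = fps_shift (k * r) (fps_mul a (fps_pow g r)) m.
Proof.
move=> Eg a r m; set P := \poly_(i < m.+1) a i; set G := \poly_(i < m.+1) g i.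
have Pa i : (i <= m)%N -> P`_i = a i by rewrite coef_poly ltnS => ->.
have Ga i : (i <= m)%N -> G`_i = g i by rewrite coef_poly ltnS => ->.
have XGE i : (i <= m)%N -> ('X^k * G)`_i = E i.
  move=> im; rewrite coefXnM Eg /fps_shift; case: leqP => // ki.
  by rewrite Ga // (leq_trans (leq_subr _ _) im).
rewrite (@fps_mul_poly _ _ P (('X^k * G) ^+ r)) //; last first.
  by move=> i im; apply/esym/fps_pow_poly => j ji; apply/XGE/(leq_trans ji).
rewrite exprMn -exprM mulrCA coefXnM /fps_shift; case: leqP => // krm.
apply/esym/fps_mul_poly => i im; first exact/Pa/(leq_trans im)/leq_subr.
by apply/esym/fps_pow_poly => j ji; apply/Ga/(leq_trans ji)/(leq_trans im)/leq_subr.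
Qed.

Lemma coef_poly_expr (R : comNzRingType) (g : nat -> R) r K e :
  ((\poly_(i < K) g i) ^+ r)`_e =
  \sum_(f : {ffun 'I_r -> 'I_K} | (\sum_(j < r) (f j : nat) == e)%N)
     \prod_(j < r) g (f j).
Proof.
rewrite poly_def -[r in LHS]card_ord -prodr_const bigA_distr_bigA coef_sum.
rewrite [RHS]big_mkcond; apply: eq_bigr => f _.
rewrite scaler_prod prodrXr coefZ coefXn eq_sym.
by case: eqP; rewrite ?mulr1 ?mulr0.
Qed.

Lemma natr_fact_neq0 n : n`!%:R != 0 :> rat.
Proof. by rewrite pnatr_eq0 -lt0n fact_gt0. Qed.

Definition exp_tail_divX (N : nat) : fps := fun i => ((N + i)`!%:R)^-1.

Lemma exp_tail_shift N : exp_tail N =1 fps_shift N (exp_tail_divX N).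
Proof.
move=> i; rewrite /exp_tail /fps_shift /exp_tail_divX.
by case: leqP => // Ni; rewrite subnKC.
Qed.

Lemma xN_fact_shift N : xN_fact N =1 fps_shift N (fps_C (N`!%:R)^-1).
Proof.
by move=> i; rewrite /xN_fact /fps_shift /fps_C subn_eq0; case: ltngtP.
Qed.

Lemma Mr_fps_pow r N e : Mr r N e = N`!%:R ^+ r * fps_pow (exp_tail_divX N) r e.
Proof.
rewrite (@fps_pow_poly _ (\poly_(i < e.+1) exp_tail_divX N i)); last first.
  by move=> i; rewrite coef_poly ltnS => ->.
rewrite coef_poly_expr mulr_sumr; apply: eq_bigr => f _.
by rewrite /exp_tail_divX prodfV.
Qed.

Lemma Mr0 r N : Mr r N 0%N = 1.
Proof.
have fps_pow0 (a : fps) k : fps_pow a k 0%N = a 0%N ^+ k.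
  elim: k => [|k IH]; first by rewrite expr0.
  by rewrite /= /fps_mul big_ord1 /= subnn IH exprS.
rewrite Mr_fps_pow fps_pow0 /exp_tail_divX addn0 -exprMn.
by rewrite divff ?expr1n ?natr_fact_neq0.
Qed.

Lemma is_hyp_bernoulliP N r b :
  is_hyp_bernoulli N r b <-> fps_mul (egf b) (Mr r N) =1 fps_one.
Proof.
pose c : rat := (N`!%:R)^-1.
have c_neq0 : c ^+ r != 0 by rewrite expf_neq0 // invr_eq0 natr_fact_neq0.
have lhsE m : fps_mul (egf b) (fps_pow (exp_tail N) r) m =
    fps_shift (N * r) (fun e => c ^+ r * fps_mul (egf b) (Mr r N) e) m.
  rewrite (fps_mul_pow_shift (exp_tail_shift N)) /fps_shift; case: leqP => // _.
  rewrite /fps_mul mulr_sumr; apply: eq_bigr => k _.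
  rewrite Mr_fps_pow mulrCA (mulrA (c ^+ r)) -exprMn mulVf ?natr_fact_neq0 //.
  by rewrite expr1n mul1r.
have rhsE m :
    fps_pow (xN_fact N) r m = fps_shift (N * r) (fun e => c ^+ r * fps_one e) m.
  rewrite -fps_mul1 (fps_mul_pow_shift (xN_fact_shift N)) /fps_shift.
  case: leqP => // _; rewrite fps_mul1 fps_pow_C /fps_C /fps_one.
  by case: eqP; rewrite ?mulr1 ?mulr0.
split=> [hb e | hM m].
  have := hb (N * r + e)%N; rewrite lhsE rhsE /fps_shift leq_addr addKn.
  exact: mulfI.
by rewrite lhsE rhsE /fps_shift; case: leqP => // _; rewrite hM.
Qed.

Fixpoint fps_inv_seq (f : fps) (e : nat) : seq rat :=
  if e is e'.+1 then
    let s := fps_inv_seq f e' in rcons s (- \sum_(k < e) s`_k * f (e - k)%N)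
  else [:: 1].

Definition fps_inv (f : fps) : fps := fun e => (fps_inv_seq f e)`_e.

Lemma size_fps_inv_seq f e : size (fps_inv_seq f e) = e.+1.
Proof. by elim: e => //= e IH; rewrite size_rcons IH. Qed.

Lemma nth_fps_inv_seq f e k : (k <= e)%N -> (fps_inv_seq f e)`_k = fps_inv f k.
Proof.
elim: e => [|e IH]; first by rewrite leqn0 => /eqP ->.
rewrite leq_eqVlt => /orP [/eqP -> //| ke].
by rewrite /= nth_rcons size_fps_inv_seq ke IH.
Qed.

Lemma fps_invS f e :
  fps_inv f e.+1 = - \sum_(k < e.+1) fps_inv f k * f (e.+1 - k)%N.
Proof.
rewrite {1}/fps_inv /= nth_rcons size_fps_inv_seq ltnn eqxx.
by congr (- _); apply: eq_bigr => k _; rewrite nth_fps_inv_seq // -ltnS.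
Qed.

Lemma fps_mul_inv {f : fps} : f 0%N = 1 -> fps_mul (fps_inv f) f =1 fps_one.
Proof.
move=> f0 [|e]; first by rewrite /fps_mul big_ord1 f0 mulr1.
by rewrite /fps_mul big_ord_recr /= subnn f0 mulr1 fps_invS addrN.
Qed.

Definition lower_toeplitz (f : fps) n : 'M[rat]_n :=
  \matrix_(i, j) if (j <= i)%N then f (i - j)%N else 0.

Definition hessenberg (f : fps) n : 'M[rat]_n :=
  \matrix_(i, j) if (j <= i)%N then f (i - j).+1 else if (j : nat) == i.+1 then 1 else 0.

Lemma lower_toeplitzM f g n :
  lower_toeplitz f n *m lower_toeplitz g n = lower_toeplitz (fps_mul g f) n.
Proof.
apply/matrixP => i j; rewrite !mxE; under eq_bigr do rewrite !mxE.
case: (leqP j i) => ji; last first.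
  apply: big1 => k _; case: leqP => ki; rewrite ?mul0r //.
  case: leqP => jk; rewrite ?mulr0 //.
  by have := leq_ltn_trans jk (leq_ltn_trans ki ji); rewrite ltnn.
pose F k := (if (k <= i)%N then f (i - k)%N else 0) *
            (if (j <= k)%N then g (k - j)%N else 0).
transitivity (\sum_(0 <= k < n) F k); first by rewrite big_mkord.
have jn : (j <= n)%N := leq_trans ji (ltnW (ltn_ord i)).
rewrite (big_cat_nat (leq0n j) jn) /= big_nat_cond big1 ?add0r; last first.
  by move=> k /andP[/andP[_ kj] _]; rewrite /F [(j <= k)%N]leqNgt kj mulr0.
rewrite (big_cat_nat (leqW ji) (ltn_ord i)) /=.
rewrite [X in _ + X]big_nat_cond [X in _ + X]big1 ?addr0; last first.
  by move=> k /andP[/andP[ik _] _]; rewrite /F [(k <= i)%N]leqNgt ik mul0r.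
rewrite -{1}(add0n j) big_addn subSn // big_mkord /fps_mul.
apply: eq_bigr => k _; rewrite /F leq_addl addnK mulrC [(k + j)%N]addnC.
by rewrite -leq_subRL // -ltnS ltn_ord subnDA.
Qed.

Lemma eq_lower_toeplitz f g n : f =1 g -> lower_toeplitz f n = lower_toeplitz g n.
Proof. by move=> fg; apply/matrixP => i j; rewrite !mxE fg. Qed.

Lemma lower_toeplitz1 n : lower_toeplitz fps_one n = 1%:M.
Proof.
apply/matrixP => i j; rewrite !mxE /fps_one subn_eq0 -val_eqE /=.
by case: ltngtP.
Qed.

Lemma det_lower_toeplitz f n : \det (lower_toeplitz f n) = f 0%N ^+ n.
Proof.
rewrite det_trig; last by apply/is_trig_mxP => i j ij; rewrite mxE leqNgt ij.
rewrite (eq_bigr (fun=> f 0%N)) ?prodr_const ?card_ord // => i _.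
by rewrite mxE leqnn subnn.
Qed.

Lemma lower_toeplitz_minor f n : f 0%N = 1 ->
  row' ord0 (col' ord_max (lower_toeplitz f n.+1)) = hessenberg f n.
Proof.
move=> f0; apply/matrixP => i j; rewrite !mxE lift0 lift_max /=.
case: (leqP j i) => ji; first by rewrite leqW // subSn.
rewrite leq_eqVlt ltnS leqNgt ji orbF.
by case: eqP => // ->; rewrite subnn.
Qed.

Lemma fps_inv_coef_hessenberg {f a : fps} (n : nat) :
  f 0%N = 1 -> fps_mul a f =1 fps_one -> a n = (-1) ^+ n * \det (hessenberg f n).
Proof.
move=> f0 af; set T := lower_toeplitz f n.+1.
have TA : T *m lower_toeplitz a n.+1 = 1%:M.
  by rewrite lower_toeplitzM -(lower_toeplitz1 n.+1); apply: eq_lower_toeplitz.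
have detT : \det T = 1 by rewrite det_lower_toeplitz f0 expr1n.
have adjT : lower_toeplitz a n.+1 = \adj T.
  have := congr1 (mulmx (\adj T)) TA.
  by rewrite mulmxA mul_adj_mx detT mul1mx mulmx1.
have -> : a n = lower_toeplitz a n.+1 ord_max ord0 by rewrite mxE /= subn0.
by rewrite adjT mxE /cofactor /= add0n lower_toeplitz_minor.
Qed.

Theorem theorem2 (r N n : nat) (hr : (1 <= r)%N) (hN : (1 <= N)%N) (hn : (1 <= n)%N) :
  (exists b : nat -> rat, is_hyp_bernoulli N r b) /\
  (forall b : nat -> rat, is_hyp_bernoulli N r b ->
     b n = (-1) ^+ n * (n`!)%:R * \det (cmat r N n)).
Proof.
have M0 := Mr0 r N.
split.
  exists (fun k => fps_inv (Mr r N) k * k`!%:R); apply/is_hyp_bernoulliP => e.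
  rewrite -(fps_mul_inv M0 e); apply: eq_bigr => k _.
  by rewrite /egf mulfK ?natr_fact_neq0.
move=> b /is_hyp_bernoulliP /(fps_inv_coef_hessenberg n M0) bn.
by rewrite -[b n](divfK (natr_fact_neq0 n)) -/(egf b n) bn mulrAC.
Qed.
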